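(* Let $\mathbb G$ be a special 2-group, $(n,\rho,\beta,c)$, $(n',\rho',\beta',c')$ admissible quadruples, and let $\xi,\bar\xi:\mathcal F(n,\rho,\beta,c)\to\mathcal F(n',\rho',\beta',c')$ be gauge trivial 1-intertwiners corresponding (as in the description of 1-intertwiners) to triples $(\mathbf R,\mathbf I,\mathsf S)$ and $(\bar{\mathbf R},\mathbf I,\bar{\mathsf S})$. Then 2-intertwiners $\xi\Rightarrow\bar\xi$ are in bijection with $n'\times n$ arrays $\mathsf T$ whose entry $\mathsf T_{i',i}$ is a complex $\bar R_{i'i}\times R_{i'i}$ matrix if $\bar R_{i'i},R_{i'i}\ne0$ and empty otherwise, satisfying $$\mathsf T_{i',i}\,\mathsf S_{i',i}(g)=\bar{\mathsf S}_{i',i}(g)\,\mathsf T_{\rho'(g)^{-1}(i'),\rho(g)^{-1}(i)}$$ for all $(i',i)\in\mathrm{Sup}(\mathbf R)\cap\mathrm{Sup}(\bar{\mathbf R})$ and all $g\in\pi_0(\mathbb G)$. Under this bijection the vertical composite of $\mathsf T:\xi\Rightarrow\bar\xi$ and $\bar{\mathsf T}:\bar\xi\Rightarrow\bar{\bar\xi}$ is the array with entries $(\bar{\mathsf T}\cdot\mathsf T)_{i',i}=\bar{\mathsf T}_{i',i}\mathsf T_{i',i}$.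
   Context: A special 2-group $\mathbb G$: skeletal monoidal groupoid, strictly invertible objects, $l,r$ identities; objects form $\pi_0(\mathbb G)$; $\pi_1(\mathbb G)=\mathrm{Aut}(e)$ a $\pi_0(\mathbb G)$-module via $g\cdot u=\gamma_g^{-1}(\delta_g(u))$, $\gamma_g(u)=u\otimes\mathrm{id}_g$, $\delta_g(u)=\mathrm{id}_g\otimes u$; canonical 3-cocycle $\alpha(g_1,g_2,g_3)=\gamma^{-1}_{g_1g_2g_3}(a_{g_1,g_2,g_3})$. $\mathbf{2Mat}_{\mathbb C}$: objects $n\ge0$; for $n,m\ge1$ a 1-morphism $n\to m$ is $(\mathbf R,s)$, $\mathbf R$ an $m\times n$ matrix over $\mathbb N$, $s=(s_i)$ a gauge with $s_i(\mathbf a)\in GL((\mathbf R\mathbf a)_i,\mathbb C)$ ($=1$ if $(\mathbf R\mathbf a)_i=0$), $s_i(\mathbf e_j)=\mathbf I_{R_{ij}}$; a 2-morphism $(\mathbf R,s)\Rightarrow(\mathbf R',s')$ is an $m\times n$ array with $(i,j)$ entry an $R'_{ij}\times R_{ij}$ complex matrix if $R_{ij},R'_{ij}\ne0$, empty otherwise; vertical composition entrywise product; composition $(\tilde{\mathbf R},\tilde s)\circ(\mathbf R,s)=(\tilde{\mathbf R}\mathbf R,\tilde s\ast s)$, $(\tilde s\ast s)_k(\mathbf a)=\tilde s_k(\mathbf R\mathbf a)\big(\bigoplus_{i}\mathbf I_{\tilde R_{ki}}\otimes s_i(\mathbf a)\big)\mathbf P(\tilde{\mathbf R}_k,\mathbf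 R,\mathbf a)\big(\bigoplus_j \tilde s_k(\mathbf R\mathbf e_j)^{-1}\otimes\mathbf I_{a_j}\big)$, $\mathbf P(\cdot)$ fixed permutation matrices (identities when $\tilde{\mathbf R}_k$ or $\mathbf a$ is a standard basis vector, $\mathbf R$ an identity, or $\mathbf R$ one column); horizontal composition $(\tilde{\mathsf T}\circ\mathsf T)_{kj}=\tilde s'_k(\mathbf R'\mathbf e_j)\big(\bigoplus_i\tilde{\mathsf T}_{ki}\otimes\mathsf T_{ij}\big)\tilde s_k(\mathbf R\mathbf e_j)^{-1}$; identities $(\mathbf I_n,\mathbf I)$, $\mathbf I$ trivial gauge. Representations and intertwiners: a 2-matrix representation is $(n,\mathbb F)$, $\mathbb F=(F,F_2,F_0):\mathbb G\to\mathsf{Equiv}_{\mathbf{2Mat}_{\mathbb C}}(n)$ monoidal; a 1-intertwiner $(f,\Phi)$ has $f:n\to n'$ and invertible $\Phi(A):F'(A)\circ f\Rightarrow f\circ F(A)$ natural and coherent; a 2-intertwiner $(f,\Phi)\Rightarrow(g,\Psi)$ is $\tau:f\Rightarrow g$ with $\Psi(A)\cdot(1_{F'(A)}\circ\tau)=(\tau\circ1_{F(A)})\cdot\Phi(A)$ for all objects $A$. Admissible quadruple $(n,\rho,\beta,c)$: $n\ge1$, $\rho:\pi_0(\mathbb G)\to S_n$, $\beta:\pi_1(\mathbb G)\to(\mathbb C^* )^n_\rho$ module homomorphism ($S_n$ acting by $(\sigma\cdot\boldsymbol\lambda)_i=\lambda_{\sigma^{-1}(i)}$) with $[\beta\circ\alpha]=0$,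 $c$ normalized 2-cochain with $\partial c=\beta\circ\alpha$. $\mathcal F(n,\rho,\beta,c)=(n,\mathbb F)$, $F(g)=(\mathbf P(\rho(g)),\mathbf I)$ with $\mathbf P(\sigma)_{ij}=\delta_{i,\sigma(j)}$, $F(\varphi)$ with only nonempty entries $\beta(\gamma_g^{-1}\varphi)_{\rho(g)(j)}$ at $(\rho(g)(j),j)$, $F_2(g_1,g_2)$ with entries $c(g_1,g_2)_{\rho(g_1g_2)(j)}$ at $(\rho(g_1g_2)(j),j)$, $F_0$ identity. A triple $(\mathbf R,s,\mathsf S)$ ($\mathbf R$ rank matrix, $s$ gauge, $\mathsf S_{i',i}:\pi_0(\mathbb G)\to GL(R_{i'i})$ for $(i',i)\in\mathrm{Sup}(\mathbf R)=\{R_{i'i}\ne0\}$) corresponds to the 1-intertwiner $((\mathbf R,s),\Phi)$ with $\Phi(g)_{i',\rho(g)^{-1}(i)}=\mathsf S_{i',i}(g)$; it is gauge trivial if $s=\mathbf I$. *)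

From HB Require Import structures.
From mathcomp Require Import all_boot all_order all_algebra all_fingroup.
From mathcomp Require Import mxtens complex Rstruct.
Set Implicit Arguments.
Unset Strict Implicit.
Unset Printing Implicit Defensive.
Import GRing.Theory.
Local Open Scope ring_scope.

Definition CC := (Rdefinitions.R)[i].

Record group := Group {
  gcar :> Type;
  gmul : gcar -> gcar -> gcar;
  gone : gcar;
  ginv : gcar -> gcar;
  gmulA : forall x y z, gmul x (gmul y z) = gmul (gmul x y) z;
  gmul1 : forall x, gmul gone x = x;
  gmulV : forall x, gmul (ginv x) x = gone }.

(** A special 2-group (skeletal monoidal groupoid, strictly invertible
   objects, l and r identities) is recorded through the data
   (pi0, pi1, action, associator): objects = pi0 (a group under tensor);
   every morphism is an automorphism; Aut(g) is identified with
   pi1 = Aut(e) through gamma_g (u |-> u (x) id_g), so that gamma_g is the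
   identity in this presentation, delta_g(u) = g . u, the tensor of
   u : g1 -> g1 and v : g2 -> g2 is u + g1 . v, and the associator
   a_{g1,g2,g3} is alpha(g1,g2,g3) (the canonical 3-cocycle).  The fields
   below are exactly the monoidal-groupoid axioms in this presentation:
   functoriality of tensor <-> action by automorphisms, pentagon <->
   3-cocycle identity, strict unitors (triangle) <-> normalization. *)
Record special2group := Special2Group {
  pi0 : group;
  pi1 : zmodType;
  pact : pi0 -> pi1 -> pi1;
  pact1 : forall u, pact (gone pi0) u = u;
  pactM : forall g h u, pact (gmul g h) u = pact g (pact h u);
  pactD : forall g u v, pact g (u + v) = pact g u + pact g v;
  alpha : pi0 -> pi0 -> pi0 -> pi1;
  alpha_cocycle : forall g1 g2 g3 g4,
    pact g1 (alpha g2 g3 g4) - alpha (gmul g1 g2) g3 g4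
    + alpha g1 (gmul g2 g3) g4 - alpha g1 g2 (gmul g3 g4)
    + alpha g1 g2 g3 = 0;
  alpha_norm1 : forall g h, alpha (gone pi0) g h = 0;
  alpha_norm2 : forall g h, alpha g (gone pi0) h = 0;
  alpha_norm3 : forall g h, alpha g h (gone pi0) = 0 }.

(** * Admissible quadruples (n, rho, beta, c).
   (C^* )^n_rho : functions 'I_n -> CC with nonzero values, pointwise
   product, S_n acting by (sigma . lambda)_i = lambda_{sigma^-1 i}.
   The coboundary of a 2-cochain c is the standard (multiplicative) one:
   (dc)(g1,g2,g3) = (g1 . c(g2,g3)) c(g1g2,g3)^-1 c(g1,g2g3) c(g1,g2)^-1.
   ([beta o alpha] = 0 is implied by the existence of c.) *)
Record admissible (G : special2group) (n : nat) := Admissible {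
  rho : pi0 G -> 'S_n;
  beta : pi1 G -> 'I_n -> CC;
  cc : pi0 G -> pi0 G -> 'I_n -> CC;
  adm_n : (0 < n)%N;
  rho_hom : forall g h x, rho (gmul g h) x = rho g (rho h x);
  beta_neq0 : forall u i, beta u i != 0;
  beta_add : forall u v i, beta (u + v) i = beta u i * beta v i;
  beta_equiv : forall g u i, beta (pact g u) i = beta u ((rho g)^-1 i)%g;
  cc_neq0 : forall g h i, cc g h i != 0;
  cc_norm1 : forall g i, cc (gone (pi0 G)) g i = 1;
  cc_norm2 : forall g i, cc g (gone (pi0 G)) i = 1;
  cc_cobound : forall g1 g2 g3 i,
    cc g2 g3 ((rho g1)^-1 i)%g * cc g1 (gmul g2 g3) i
      / (cc (gmul g1 g2) g3 i * cc g1 g2 i)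
    = beta (alpha g1 g2 g3) i }.

Definition rkmx (m n : nat) := 'I_m -> 'I_n -> nat.

(* product of rank matrices (composition of 1-morphisms, on ranks) *)
Definition rkmul p m n (A : rkmx p m) (B : rkmx m n) : rkmx p n :=
  fun k j => (\sum_(i < m) A k i * B i j)%N.

Definition permrk n (s : 'S_n) : rkmx n n := fun i j => nat_of_bool (i == s j).

(* A 2-morphism (R,s) => (R',s') : an m x n array whose (i,j) entry is an
   R'_ij x R_ij complex matrix ('M_(0,k), 'M_(k,0) are the empty entries). *)
Definition mor2 m n (R R' : rkmx m n) := forall i j, 'M[CC]_(R' i j, R i j).

Definition vcomp m n (R R' R'' : rkmx m n) (T' : mor2 R' R'') (T : mor2 R R')
  : mor2 R R'' := fun i j => T' i j *m T i j.

Definition id2 m n (R : rkmx m n) : mor2 R R := fun i j => 1%:M.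

Definition dsum k (p q : 'I_k -> nat) (B : forall i, 'M[CC]_(p i, q i))
  : 'M[CC]_(\sum_(i < k) p i, \sum_(i < k) q i) :=
  @mxblock CC k k p q (fun i j => if i == j then conform_mx 0 (B i) else 0).

(* Horizontal composition of 2-morphisms between 1-morphisms whose gauges
   are trivial: (Tt o T)_{kj} = (+)_i Tt_{ki} (x) T_{ij}  (Kronecker product);
   this is the general formula with s~ = s~' = I (all gauge factors are
   identity matrices). *)
Definition hcomp p m n (Rt Rt' : rkmx p m) (R R' : rkmx m n)
  (Tt : mor2 Rt Rt') (T : mor2 R R') : mor2 (rkmul Rt R) (rkmul Rt' R') :=
  fun k j => dsum (fun i => tensmx (Tt k i) (T i j)).

(* F(g) = (P(rho g), I) *)
Definition Fobj G n (q : admissible G n) (g : pi0 G) : rkmx n n :=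
  permrk (rho q g).

(* F(phi) for phi = gamma_g(u) : g -> g : entry beta(u)_{rho(g)(j)} at
   (rho(g)(j), j), all other entries empty. *)
Definition Fmor G n (q : admissible G n) (g : pi0 G) (u : pi1 G)
  : mor2 (Fobj q g) (Fobj q g) := fun i j => const_mx (beta q u i).

Lemma rkmul_perm_r m n (R : rkmx m n) (s : 'S_n) i j :
  R i (s j) = rkmul R (permrk s) i j.
Proof.
rewrite /rkmul /permrk (bigD1 (s j)) //= eqxx muln1 big1 ?addn0 // => k /negbTE ->.
by rewrite muln0.
Qed.

Lemma rkmul_perm_l m n (R : rkmx m n) (s : 'S_m) i j :
  R ((s^-1)%g i) j = rkmul (permrk s) R i j.
Proof.
rewrite /rkmul /permrk (bigD1 ((s^-1)%g i)) //= permKV eqxx mul1n big1 ?addn0 //.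
move=> k Hk; case: eqP => // Ei; case/negP: Hk; by rewrite Ei permK.
Qed.

Record gt_triple G n n' (q : admissible G n) (q' : admissible G n') := GtTriple {
  trk : rkmx n' n;
  tS : forall (i' : 'I_n') (i : 'I_n), pi0 G -> 'M[CC]_(trk i' i);
  tS_unit : forall i' i g, (trk i' i != 0)%N -> tS i' i g \in unitmx;
  (* needed for Phi(g) : F'(g) o f => f o F(g) to be well typed *)
  trk_inv : forall g i' i,
    trk ((rho q' g)^-1 i')%g ((rho q g)^-1 i)%g = trk i' i }.

Section Phi.
Variables (G : special2group) (n n' : nat) (q : admissible G n)
  (q' : admissible G n') (xi : gt_triple q q').

Lemma Phi_eq_l g i' j :
  trk xi i' (rho q g j) = rkmul (trk xi) (Fobj q g) i' j.
Proof. exact: rkmul_perm_r. Qed.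

Lemma Phi_eq_r g i' j :
  trk xi i' (rho q g j) = rkmul (Fobj q' g) (trk xi) i' j.
Proof.
rewrite /Fobj -rkmul_perm_l -(trk_inv xi g i' (rho q g j)).
by rewrite -permM mulgV perm1.
Qed.

(* Phi(g) : F'(g) o f => f o F(g),  Phi(g)_{i', rho(g)^-1(i)} = S_{i',i}(g) *)
Definition Phi (g : pi0 G)
  : mor2 (rkmul (Fobj q' g) (trk xi)) (rkmul (trk xi) (Fobj q g)) :=
  fun i' j => castmx (Phi_eq_l g i' j, Phi_eq_r g i' j) (tS xi i' (rho q g j) g).
End Phi.

(* (f, Phi) is a 1-intertwiner: naturality of Phi in the morphisms of G
   (phi = gamma_g(u) : g -> g):
   Phi(g) . (F'(phi) o 1_f) = (1_f o F(phi)) . Phi(g). *)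
Definition is_1intertwiner G n n' (q : admissible G n) (q' : admissible G n')
  (xi : gt_triple q q') : Prop :=
  forall (g : pi0 G) (u : pi1 G),
    vcomp (Phi xi g) (hcomp (Fmor q' g u) (id2 (trk xi)))
    = vcomp (hcomp (id2 (trk xi)) (Fmor q g u)) (Phi xi g).

Definition is_2intertwiner G n n' (q : admissible G n) (q' : admissible G n')
  (xi xib : gt_triple q q') (tau : mor2 (trk xi) (trk xib)) : Prop :=
  forall g : pi0 G,
    vcomp (Phi xib g) (hcomp (id2 (Fobj q' g)) tau)
    = vcomp (hcomp tau (id2 (Fobj q g))) (Phi xi g).

Definition array_cond G n n' (q : admissible G n) (q' : admissible G n')
  (xi xib : gt_triple q q') (T : mor2 (trk xi) (trk xib)) : Prop :=
  forall (g : pi0 G) (i' : 'I_n') (i : 'I_n),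
    (trk xi i' i != 0)%N -> (trk xib i' i != 0)%N ->
    T i' i *m tS xi i' i g
    = tS xib i' i g *m castmx (trk_inv xib g i' i, trk_inv xi g i' i)
                         (T ((rho q' g)^-1 i')%g ((rho q g)^-1 i)%g).

Arguments is_2intertwiner {G n n' q q'} xi xib tau.
Arguments array_cond {G n n' q q'} xi xib T.
Arguments is_1intertwiner {G n n' q q'} xi.

(* The whiskerings of a 2-morphism by F(g) = P(rho g) only permute its entries:
   every block-diagonal sum appearing in them has a single block that is not
   empty, and tensoring with a 1x1 identity is a cast.  Hence, up to casts
   along equalities of ranks, entry (i', j) of the 2-intertwiner equation for
   tau at g is the array equation at (i', rho(g) j), and where one of the two
   ranks vanishes both sides are empty matrices. *)
From mathcomp Require Import all_boot all_order all_algebra all_fingroup.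
From mathcomp Require Import mxtens complex Rstruct.
From Stdlib Require Import FunctionalExtensionality.
Set Implicit Arguments.
Unset Strict Implicit.
Unset Printing Implicit Defensive.
Import GRing.Theory.
Local Open Scope ring_scope.

Section EmptyMatrices.
Variables (R : nmodType) (m n : nat).

Lemma mx_eq_rows0 (A B : 'M[R]_(m, n)) : m = 0%N -> A = B.
Proof. by move=> m0; move: A B; rewrite m0 => A B; rewrite !flatmx0. Qed.

Lemma mx_eq_cols0 (A B : 'M[R]_(m, n)) : n = 0%N -> A = B.
Proof. by move=> n0; move: A B; rewrite n0 => A B; rewrite !thinmx0. Qed.

End EmptyMatrices.

Section Casts.
Variable R : pzRingType.

Lemma castmx_reindex (I : Type) (m n : I -> nat) (T : forall x, 'M[R]_(m x, n x))
  x y p q (e : (m x = p) * (n x = q)) :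
  x = y -> exists e', castmx e (T x) = castmx e' (T y).
Proof. by move=> <-; exists e. Qed.

Lemma castmx_mulmx_eq x z y1 y2 X Y Z W (Sb : 'M[R]_x) (S : 'M[R]_z)
  (A : 'M[R]_(y1, y2)) (B : 'M[R]_(x, z)) (eA : (y1 = x) * (y2 = z))
  (e1 : (x = X) * (x = Y)) (e2 : (y1 = Y) * (y2 = Z))
  (e3 : (x = X) * (z = W)) (e4 : (z = W) * (z = Z)) :
  castmx e1 Sb *m castmx e2 A = castmx e3 B *m castmx e4 S <->
  B *m S = Sb *m castmx eA A.
Proof.
case: e1 e2 e3 e4 eA => eX eY [? ?] [? ?] [? ?] [? ?].
subst X Y W Z y1 y2; rewrite !castmx_id.
by split=> /esym.
Qed.

Lemma tens_id1mx k m n (A : 'M[R]_(m, n)) :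
  k = 1%N -> exists e, (1%:M : 'M[R]_k) *t A = castmx e A.
Proof. by move=> ->; rewrite tens_scalar1mx; eexists. Qed.

End Casts.

Lemma tens_mxid1 (R : comPzRingType) k m n (A : 'M[R]_(m, n)) :
  k = 1%N -> exists e, A *t (1%:M : 'M[R]_k) = castmx e A.
Proof. by move=> ->; rewrite tens_mx_scalar scale1r; eexists. Qed.

Lemma dsum_single k (p q : 'I_k -> nat) (B : forall i, 'M[CC]_(p i, q i)) i0 :
  (forall i, i != i0 -> p i = 0%N) -> (forall i, i != i0 -> q i = 0%N) ->
  exists e, dsum B = castmx e (B i0).
Proof.
move=> p0 q0.
have sum_single r : (forall i, i != i0 -> r i = 0%N) -> r i0 = (\sum_i r i)%N.
  by move=> r0; rewrite (bigD1 i0) //= big1 ?addn0.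
have before0 r : (forall i, i != i0 -> r i = 0%N) ->
    (\sum_(i < k | i < i0) r i = 0)%N.
  by move=> r0; rewrite big1 // => i; rewrite ltn_neqAle => /andP[/r0].
exists (sum_single p p0, sum_single q q0); apply/mxblockP => i j.
rewrite /dsum mxblockK.
have [-> | /p0 pi0] := eqVneq i i0; last exact: mx_eq_rows0.
have [-> | /q0 qj0] := eqVneq j i0; last exact: mx_eq_cols0.
rewrite conform_mx_id; apply/matrixP => a b; rewrite !mxE castmxE.
congr (B i0 _ _); apply: val_inj.
- by have := tagnat.RankEsum (p_ := p) a; rewrite before0 // add0n => ->.
- by have := tagnat.RankEsum (p_ := q) b; rewrite before0 // add0n => ->.
Qed.

Section PermutationWhiskering.
Variables (m k n : nat).

Lemma hcomp_id2_permrk (s : 'S_m) (R R' : rkmx m n) (T : mor2 R R') i j :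
  exists e, hcomp (id2 (permrk s)) T i j = castmx e (T (s^-1 i)%g j).
Proof.
rewrite /hcomp /id2.
have off0 l : l != (s^-1 i)%g -> permrk s i l = 0%N.
  by rewrite /permrk -(inj_eq (@perm_inj _ s)) permKV eq_sym => /negbTE ->.
have rows0 l : l != (s^-1 i)%g -> (permrk s i l * R' l j = 0)%N by move/off0 ->.
have cols0 l : l != (s^-1 i)%g -> (permrk s i l * R l j = 0)%N by move/off0 ->.
have diag1 : permrk s i (s^-1 i)%g = 1%N by rewrite /permrk permKV eqxx.
have [e1 ->] := dsum_single (fun l => (1%:M : 'M_(permrk s i l)) *t T l j) rows0 cols0.
have [e2 ->] := tens_id1mx (T (s^-1 i)%g j) diag1.
by case: e1 e2 => [? ?] [? ?]; rewrite castmx_comp; eexists.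
Qed.

Lemma hcomp_permrk_id2 (s : 'S_n) (R R' : rkmx k n) (T : mor2 R R') i j :
  exists e, hcomp T (id2 (permrk s)) i j = castmx e (T i (s j)).
Proof.
rewrite /hcomp /id2.
have off0 l : l != s j -> permrk s l j = 0%N by rewrite /permrk => /negbTE ->.
have rows0 l : l != s j -> (R' i l * permrk s l j = 0)%N by move/off0 ->; rewrite muln0.
have cols0 l : l != s j -> (R i l * permrk s l j = 0)%N by move/off0 ->; rewrite muln0.
have diag1 : permrk s (s j) j = 1%N by rewrite /permrk eqxx.
have [e1 ->] := dsum_single (fun l => T i l *t (1%:M : 'M_(permrk s l j))) rows0 cols0.
have [e2 ->] := tens_mxid1 (T i (s j)) diag1.
by case: e1 e2 => [? ?] [? ?]; rewrite castmx_comp; eexists.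
Qed.

End PermutationWhiskering.

Section TwoIntertwiners.
Variables (G : special2group) (n n' : nat) (q : admissible G n) (q' : admissible G n').
Variables (xi xib : gt_triple q q').

Definition array_eq (T : mor2 (trk xi) (trk xib)) g i' i :=
  T i' i *m tS xi i' i g
  = tS xib i' i g *m castmx (trk_inv xib g i' i, trk_inv xi g i' i)
                       (T ((rho q' g)^-1 i')%g ((rho q g)^-1 i)%g).

Lemma is_2intertwiner_entryP (T : mor2 (trk xi) (trk xib)) g i' j :
  vcomp (Phi xib g) (hcomp (id2 (Fobj q' g)) T) i' j
    = vcomp (hcomp T (id2 (Fobj q g))) (Phi xi g) i' j
  <-> array_eq T g i' (rho q g j).
Proof.
rewrite /vcomp /Phi /array_eq.
have [[? ?] ->] := hcomp_id2_permrk (rho q' g) T i' j.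
have [[? ?] ->] := hcomp_permrk_id2 (rho q g) T i' j.
have [e ->] := castmx_reindex (T ((rho q' g)^-1 i')%g)
  (trk_inv xib g i' (rho q g j), trk_inv xi g i' (rho q g j)) (permK _ j).
exact: castmx_mulmx_eq.
Qed.

Lemma is_2intertwiner_array_eq (T : mor2 (trk xi) (trk xib)) :
  is_2intertwiner xi xib T <-> forall g i' i, array_eq T g i' i.
Proof.
split=> [T2 g i' i | Teq g].
  by have /is_2intertwiner_entryP := congr1 (fun F => F i' ((rho q g)^-1 i)%g) (T2 g);
    rewrite permKV.
apply: functional_extensionality_dep => i'.
by apply: functional_extensionality_dep => j; apply/is_2intertwiner_entryP.
Qed.

End TwoIntertwiners.

Theorem mainTheorem12 (G : special2group) (n n' : nat)
  (q : admissible G n) (q' : admissible G n')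
  (xi xib : gt_triple q q') :
  is_1intertwiner xi -> is_1intertwiner xib ->
  (forall T : mor2 (trk xi) (trk xib),
      is_2intertwiner xi xib T <-> array_cond xi xib T) /\
  (forall (xibb : gt_triple q q'), is_1intertwiner xibb ->
   forall (T : mor2 (trk xi) (trk xib)) (Tb : mor2 (trk xib) (trk xibb)),
     is_2intertwiner xi xib T -> is_2intertwiner xib xibb Tb ->
     vcomp Tb T = (fun i' i => Tb i' i *m T i' i)).
Proof.
move=> _ _; split=> [T | //]; rewrite is_2intertwiner_array_eq.
split=> [Teq g i' i _ _ | Tcond g i' i]; first exact: Teq.
have [xi0 | xi_ne0] := eqVneq (trk xi i' i) 0%N; first by apply: mx_eq_cols0 xi0.
have [xib0 | xib_ne0] := eqVneq (trk xib i' i) 0%N; first by apply: mx_eq_rows0 xib0.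
exact: Tcond.
Qed.
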